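(* Let $\mathcal{H}$ be a real Hilbert space, $N\ge2$, $\theta\in(0,1)$, $\Gamma\subseteq\mathbb{R}_{++}$ a nonempty closed interval, and for $\gamma\in\Gamma$ let $T_\gamma:\mathcal{H}^{N-1}\to\mathcal{H}^{N-1}$ be the Malitsky--Tam operator defined in the context. Suppose one of the following holds: (a) $A_1,\dots,A_{N-1}:\mathcal{H}\to\mathcal{H}$ are monotone and $L$-Lipschitz, and $A_N:\mathcal{H}\rightrightarrows\mathcal{H}$ is maximally $\mu$-strongly monotone; (b) $A_1,\dots,A_{N-1}:\mathcal{H}\to\mathcal{H}$ are maximally $\mu$-strongly monotone and $L$-Lipschitz, and $A_N:\mathcal{H}\rightrightarrows\mathcal{H}$ is maximally monotone. Then there exists $\beta\in[0,1)$ such that every $T_\gamma$, $\gamma\in\Gamma$, is a $\beta$-contraction.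
   Context: $J_A=(\mathrm{Id}+A)^{-1}$. Malitsky--Tam operator: for $\mathbf{x}=(x^1,\dots,x^{N-1})\in\mathcal{H}^{N-1}$, set $z^1=J_{\gamma A_1}x^1$, $z^i=J_{\gamma A_i}(z^{i-1}+x^i-x^{i-1})$ for $i=2,\dots,N-1$, $z^N=J_{\gamma A_N}(z^1+z^{N-1}-x^{N-1})$, and $T_\gamma\mathbf{x}=\mathbf{x}+\theta(z^2-z^1,\dots,z^N-z^{N-1})$. An operator $A$ is $\mu$-strongly monotone if $\langle x-y,u-v\rangle\ge\mu\|x-y\|^2$ for all $(x,u),(y,v)\in\operatorname{gra}A$. A $\beta$-contraction satisfies $\|T\mathbf{x}-T\mathbf{y}\|\le\beta\|\mathbf{x}-\mathbf{y}\|$ in the product norm of $\mathcal{H}^{N-1}$. *)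

(* A real Hilbert space is modelled as a complete
   normed module over a realType R whose norm is induced by an inner product. *)
From HB Require Import structures.
From mathcomp Require Import all_boot all_order all_algebra.
From mathcomp Require Import all_classical all_reals all_analysis.
Set Implicit Arguments. Unset Strict Implicit. Unset Printing Implicit Defensive.
Import Order.TTheory GRing.Theory Num.Theory.
Import numFieldNormedType.Exports.
Local Open Scope classical_set_scope.
Local Open Scope ring_scope.

Record inner_product (R : realType) (V : normedModType R) := InnerProduct {
  ip :> V -> V -> R;
  ip_sym : forall x y, ip x y = ip y x;
  ip_linl : forall (a : R) x y z, ip (a *: x + y) z = a * ip x z + ip y z;
  ip_normE : forall x, ip x x = `|x| ^+ 2 }.

Section Ops.
Context {R : realType} {V : completeNormedModType R} (ip : inner_product V).

Definition graph_of (f : V -> V) : V -> set V := fun x => [set f x].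

Definition monotone_op (A : V -> set V) : Prop :=
  forall x y u v, A x u -> A y v -> 0 <= ip (x - y) (u - v).

Definition strongly_monotone (mu : R) (A : V -> set V) : Prop :=
  forall x y u v, A x u -> A y v -> mu * `|x - y| ^+ 2 <= ip (x - y) (u - v).

Definition maximally_monotone (A : V -> set V) : Prop :=
  monotone_op A /\
  forall x u, (forall y v, A y v -> 0 <= ip (x - y) (u - v)) -> A x u.

Definition maximally_strongly_monotone (mu : R) (A : V -> set V) : Prop :=
  maximally_monotone A /\ strongly_monotone mu A.

Definition lipschitz_op (L : R) (f : V -> V) : Prop :=
  forall x y, `|f x - f y| <= L * `|x - y|.

(* resolvent J_{gamma A} = (Id + gamma A)^{-1}: the (for maximally monotone A,
   unique) point z with x \in z + gamma A z; chosen by xget *)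
Definition resolvent (gamma : R) (A : V -> set V) (x : V) : V :=
  xget 0 [set z | exists u, A z u /\ x = z + gamma *: u].

Definition prod_norm (n : nat) (x : 'I_n -> V) : R :=
  Num.sqrt (\sum_(i < n) `|x i| ^+ 2).

Definition beta_contraction (n : nat) (beta : R) (T : ('I_n -> V) -> ('I_n -> V)) :=
  forall x y, prod_norm (fun i => T x i - T y i) <= beta * prod_norm (fun i => x i - y i).

Definition nat_get (n : nat) (x : 'I_n -> V) (i : nat) : V :=
  match @insub nat (fun k => k < n)%N _ i with Some j => x j | None => 0 end.

Fixpoint mt_z (J : nat -> V -> V) (x : nat -> V) (i : nat) : V :=
  match i with
  | 0 => J 0%N (x 0%N)
  | k.+1 => J k.+1 (mt_z J x k + x k.+1 - x k)
  end.

(* Malitsky--Tam operator on H^n with n = N-1, 0-based indices: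
   A j (j < n) stands for A_{j+1}, B for A_N;
   z_0 = J_{gA_1} x_0, z_i = J_{gA_{i+1}} (z_{i-1} + x_i - x_{i-1}) (1 <= i <= n-1),
   z_n = J_{gB} (z_0 + z_{n-1} - x_{n-1}),
   (T x)_i = x_i + theta (z_{i+1} - z_i). *)
Definition MT_op (n : nat) (gamma theta : R) (A : 'I_n -> V -> V)
    (B : V -> set V) (x : 'I_n -> V) : 'I_n -> V :=
  let J := fun k => match @insub nat (fun k => k < n)%N _ k with
                    | Some j => resolvent gamma (graph_of (A j))
                    | None => id end in
  let xn := nat_get x in
  let z := fun i => if (i < n)%N then mt_z J xn i
                    else resolvent gamma B (mt_z J xn 0 + mt_z J xn n.-1 - xn n.-1) in
  fun i => x i + theta *: (z (nat_of_ord i).+1 - z (nat_of_ord i)).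

End Ops.

From HB Require Import structures.
From mathcomp Require Import all_boot all_order all_algebra.
From mathcomp Require Import all_classical all_reals all_analysis.
From mathcomp Require Import ring lra.
Set Implicit Arguments. Unset Strict Implicit. Unset Printing Implicit Defensive.
Import Order.TTheory GRing.Theory Num.Theory.
Import numFieldNormedType.Exports.
Local Open Scope classical_set_scope.
Local Open Scope ring_scope.

(* Let X = x - y be the difference of two inputs of T_gamma and Z = z - z' the
   difference of the points z^1, ..., z^N they produce.  Expanding the squares gives
     sum |X_k + theta (Z_(k+1) - Z_k)|^2
       = sum |X_k|^2 - 2 theta P - theta (1 - theta) sum |Z_(k+1) - Z_k|^2
         - theta |Z_1 - Z_N|^2,
   where P pairs each Z_k with the matching difference of resolvent residuals,
   gamma (a_k - a'_k) with a_k in A_k z_k.  Monotonicity makes every term of P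
   nonnegative and strong monotonicity makes one of them at least gamma mu |Z_j|^2.
   Lipschitz continuity of A_1, ..., A_(N-1) bounds every X_k, hence
   sum |X_k|^2 <= K (|Z_j|^2 + sum |Z_(k+1) - Z_k|^2) with K depending only on N and
   b L.  Together, sum |X_k + ...|^2 <= (1 - c / K) sum |X_k|^2 with c independent of
   gamma in [a, b].  Resolvents of maximally monotone operators are everywhere
   defined by Minty's theorem, proved by minimizing the Fitzpatrick function plus
   a squared norm. *)

Section InnerProduct.
Context {R : realType} {V : normedModType R} (ip : inner_product V).

Lemma ipDl x y z : ip (x + y) z = ip x z + ip y z.
Proof. by have := ip_linl ip 1 x y z; rewrite scale1r mul1r. Qed.

Lemma ip0l z : ip 0 z = 0.
Proof. by have := ipDl 0 0 z; rewrite addr0; lra. Qed.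

Lemma ipZl a x z : ip (a *: x) z = a * ip x z.
Proof. by have := ip_linl ip a x 0 z; rewrite addr0 ip0l addr0. Qed.

Lemma ipNl x z : ip (- x) z = - ip x z.
Proof. by rewrite -scaleN1r ipZl mulN1r. Qed.

Lemma ipBl x y z : ip (x - y) z = ip x z - ip y z.
Proof. by rewrite ipDl ipNl. Qed.

Lemma ip0r z : ip z 0 = 0.
Proof. by rewrite ip_sym ip0l. Qed.

Lemma ipDr x y z : ip z (x + y) = ip z x + ip z y.
Proof. by rewrite ip_sym ipDl !(ip_sym _ z). Qed.

Lemma ipZr a x z : ip z (a *: x) = a * ip z x.
Proof. by rewrite ip_sym ipZl ip_sym. Qed.

Lemma ipNr x z : ip z (- x) = - ip z x.
Proof. by rewrite ip_sym ipNl ip_sym. Qed.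

Lemma ipBr x y z : ip z (x - y) = ip z x - ip z y.
Proof. by rewrite ipDr ipNr. Qed.

Lemma ip_sqr_le x y : ip x y ^+ 2 <= `|x| ^+ 2 * `|y| ^+ 2.
Proof.
have [->|y0] := eqVneq y 0; first by rewrite ip0r normr0 expr0n mulr0.
have ny : 0 < `|y| ^+ 2 by rewrite exprn_gt0 // normr_gt0.
have hv : 0 <= ip (`|y| ^+ 2 *: x - ip x y *: y) (`|y| ^+ 2 *: x - ip x y *: y).
  by rewrite ip_normE sqr_ge0.
rewrite ipBl !ipBr !ipZl !ipZr !ip_normE (ip_sym _ y x) in hv.
have : 0 <= `|y| ^+ 2 * (`|x| ^+ 2 * `|y| ^+ 2 - ip x y ^+ 2) by lra.
by rewrite pmulr_rge0 // subr_ge0.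
Qed.

Lemma normr_ip_le x y : `|ip x y| <= `|x| * `|y|.
Proof.
by rewrite -(ler_pXn2r (n := 2)) ?nnegrE // ?mulr_ge0 // real_normK ?num_real // exprMn ip_sqr_le.
Qed.

Lemma ip_cvg T (F : set_system T) {FF : Filter F} (f g : T -> V) a b :
  f @ F --> a -> g @ F --> b -> ip (f t) (g t) @[t --> F] --> ip a b.
Proof.
move=> fa gb; apply/subr_cvg0.
set h := fun t => `|f t - a| * `|g t| + `|a| * `|g t - b|.
have h0 : h t @[t --> F] --> (0 : R).
  have fa0 : `|f t - a| @[t --> F] --> 0 by have /subr_cvg0/cvg_norm := fa; rewrite normr0.
  have gb0 : `|g t - b| @[t --> F] --> 0 by have /subr_cvg0/cvg_norm := gb; rewrite normr0.
  rewrite (_ : 0 = 0 * `|b| + `|a| * 0); last by rewrite mul0r mulr0 addr0.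
  by apply: cvgD; [apply: cvgM => //; exact: cvg_norm | exact: cvgMl_tmp].
have mh0 : (- h) @ F --> (0 : R) by rewrite -oppr0; exact: cvgN.
apply: (@squeeze_cvgr _ _ _ _ _ _ (fun t => ip (f t) (g t) - ip a b) _ 0 mh0 h0).
apply: nearW => t; rewrite /= -ler_norml.
have -> : ip (f t) (g t) - ip a b = ip (f t - a) (g t) + ip a (g t - b).
  by rewrite ipBl ipBr; ring.
by apply: le_trans (ler_normD _ _) _; apply: lerD; apply: normr_ip_le.
Qed.

End InnerProduct.

Lemma harmonic_le {R : realType} k l : (k <= l)%N -> harmonic l <= harmonic k :> R.
Proof. by move=> kl; rewrite /harmonic /= lef_pV2 ?posrE // ler_nat ltnS. Qed.

Lemma cvg_harmonic_cauchy (R : realType) (V : completeNormedModType R)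
    (s : nat -> V) (C : R) :
  (forall k l, `|s k - s l| ^+ 2 <= C * (harmonic k + harmonic l)) -> cvg (s @ \oo).
Proof.
move=> hs; apply: cauchy_cvg; apply: cauchy_exP => e e0.
have C1 : 0 < 2 * (`|C| + 1) by rewrite mulr_gt0 // ltr_wpDl.
have e' : 0 < e ^+ 2 / (2 * (`|C| + 1)) by rewrite divr_gt0 // exprn_gt0.
have [N hN] := filter_ex (near_infty_natSinv_lt (PosNum e')).
exists (s N), N => // k /= Nk; rewrite -ball_normE /ball_ /=.
have hNk : harmonic k <= harmonic N :> R := harmonic_le Nk.
have hN0 : 0 <= harmonic N :> R := ltW (harmonic_gt0 N).
have hk0 : 0 <= harmonic k :> R := ltW (harmonic_gt0 k).
have hlt : 2 * (`|C| + 1) * harmonic N < e ^+ 2 by rewrite mulrC -ltr_pdivlMr //; exact: hN.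
have : `|s N - s k| ^+ 2 < e ^+ 2.
  apply: le_lt_trans (hs N k) _; apply: le_lt_trans hlt.
  apply: le_trans (ler_norm _) _; rewrite normrM [`|_ + _|]ger0_norm ?addr_ge0 //.
  by have := normr_ge0 C; nra.
by rewrite ltr_pXn2r // ?nnegrE // ltW.
Qed.

Section Fitzpatrick.
Context {R : realType} {V : completeNormedModType R} (ip : inner_product V).
Variable A : V -> set V.
Hypothesis A_mmono : maximally_monotone ip A.

(* [fitz_bound x u c]: c bounds F_A(x, u) + (|x|^2 + |u|^2) / 2, where F_A is the
   Fitzpatrick function of A.  This sum is 1-strongly convex and, by maximality,
   at least |x + u|^2 / 2; its minimizer yields a zero of A + Id. *)
Definition fitz_bound (x u : V) (c : R) :=
  forall y v, A y v -> ip x v + ip y u - ip y v + (`|x| ^+ 2 + `|u| ^+ 2) / 2 <= c.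

Lemma fitz_bound_le x u c c' : c <= c' -> fitz_bound x u c -> fitz_bound x u c'.
Proof. by move=> cc' hc y v Ayv; apply: le_trans cc'; apply: hc. Qed.

Lemma fitz_bound_graph y v : A y v -> fitz_bound y v (ip y v + (`|y| ^+ 2 + `|v| ^+ 2) / 2).
Proof.
move=> Ayv y' v' Ay'v'; have := A_mmono.1 y y' v v' Ayv Ay'v'.
by rewrite ipBl !ipBr (ip_sym _ y' v); lra.
Qed.

Lemma fitz_bound_ge x u c : fitz_bound x u c -> `|x + u| ^+ 2 / 2 <= c.
Proof.
have -> : `|x + u| ^+ 2 / 2 = ip x u + (`|x| ^+ 2 + `|u| ^+ 2) / 2.
  by rewrite -!(ip_normE ip) ipDl !ipDr (ip_sym _ u x); field.
move=> hc; rewrite leNgt; apply/negP => hlt.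
have Axu : A x u.
  by apply: A_mmono.2 => y v Ayv; have := hc y v Ayv; rewrite ipBl !ipBr; lra.
by have := hc x u Axu; lra.
Qed.

Lemma fitz_bound_convex x u c x' u' c' t : 0 <= t <= 1 ->
  fitz_bound x u c -> fitz_bound x' u' c' ->
  fitz_bound ((1 - t) *: x + t *: x') ((1 - t) *: u + t *: u')
    ((1 - t) * c + t * c' - t * (1 - t) / 2 * (`|x - x'| ^+ 2 + `|u - u'| ^+ 2)).
Proof.
move=> /andP[t0 t1] hc hc' y v Ayv.
have := hc y v Ayv; have := hc' y v Ayv.
rewrite -!(ip_normE ip) !(ipDl, ipBl, ipZl, ipNl, ipDr, ipBr, ipZr, ipNr).
rewrite (ip_sym _ x' x) (ip_sym _ u' u) => h' h.
have t1' : 0 <= 1 - t by rewrite subr_ge0.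
by have := ler_wpM2l t0 h'; have := ler_wpM2l t1' h; lra.
Qed.

Lemma fitz_bound_lim (xs us : nat -> V) xb ub c :
  (forall k, fitz_bound (xs k) (us k) (c + harmonic k)) ->
  xs @ \oo --> xb -> us @ \oo --> ub -> fitz_bound xb ub c.
Proof.
move=> hc xsb usb y v Ayv.
apply: (@ler_cvg_to _ \oo _ _
  (fun k => ip (xs k) v + ip y (us k) - ip y v + (`|xs k| ^+ 2 + `|us k| ^+ 2) / 2)
  (fun k => c + harmonic k)); last exact: nearW (fun k => hc k y v Ayv).
  apply: cvgD; first apply: cvgB; first apply: cvgD.
  - by apply: ip_cvg => //; exact: cvg_cst.
  - by apply: ip_cvg => //; exact: cvg_cst.
  - exact: cvg_cst.
  - by apply: cvgMr_tmp; apply: cvgD; apply: cvgM; apply: cvg_norm.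
by rewrite -[X in _ --> X]addr0; apply: cvgD; [exact: cvg_cst | exact: cvg_harmonic].
Qed.

Lemma fitz_min_exists : exists xb ub m, fitz_bound xb ub m /\
  forall x u c, fitz_bound x u c -> m <= c.
Proof.
set E := [set c | exists x u, fitz_bound x u c].
have [y [v Ayv]] : exists y v, A y v.
  have [//|A0] := pselect (exists y v, A y v); exists 0, 0.
  by apply: A_mmono.2 => y v Ayv; exfalso; apply: A0; exists y, v.
have E_lb : has_lbound E.
  exists 0 => c [x [u /fitz_bound_ge]]; apply: le_trans.
  by rewrite divr_ge0 // sqr_ge0.
have hinf : has_inf E by split => //; eexists; exists y, v; exact: fitz_bound_graph.
set m := inf E.
have m_le x u c : fitz_bound x u c -> m <= c by move=> hc; apply: ge_inf => //; exists x, u.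
have near_m k : exists p : V * V, fitz_bound p.1 p.2 (m + harmonic k).
  have [c [x [u hc]] cm] := inf_adherent (harmonic_gt0 k) hinf.
  by exists (x, u); apply: fitz_bound_le hc; apply: ltW.
have [f hf] := choice near_m.
set xs := fun k => (f k).1; set us := fun k => (f k).2.
have dist_le k l :
    `|xs k - xs l| ^+ 2 + `|us k - us l| ^+ 2 <= 4 * (harmonic k + harmonic l).
  have half : 0 <= (2^-1 : R) <= 1 by apply/andP; split; lra.
  by have := m_le _ _ _ (fitz_bound_convex half (hf k) (hf l)); lra.
have /cvg_ex[xb xsb] : cvg (xs @ \oo).
  apply: (cvg_harmonic_cauchy (C := 4)) => k l.
  by have := dist_le k l; have := sqr_ge0 `|us k - us l|; lra.
have /cvg_ex[ub usb] : cvg (us @ \oo).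
  apply: (cvg_harmonic_cauchy (C := 4)) => k l.
  by have := dist_le k l; have := sqr_ge0 `|xs k - xs l|; lra.
by exists xb, ub, m; split => //; exact: fitz_bound_lim hf xsb usb.
Qed.

Lemma fitz_min_growth xb ub m x u c : fitz_bound xb ub m ->
  (forall x u c, fitz_bound x u c -> m <= c) -> fitz_bound x u c ->
  (`|xb - x| ^+ 2 + `|ub - u| ^+ 2) / 2 <= c - m.
Proof.
move=> hm m_le hc; set D := _ + _; rewrite leNgt; apply/negP => hlt.
have D0 : 0 < D by have := m_le _ _ _ hc; lra.
(* for this step t towards (x, u), strong convexity would undercut the minimum m *)
set t := (D / 2 - (c - m)) / D.
have t0 : 0 < t by rewrite divr_gt0 // subr_gt0.
have t01 : 0 <= t <= 1.
  by rewrite ltW //= ler_pdivrMr // mul1r; have := m_le _ _ _ hc; lra.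
have := m_le _ _ _ (fitz_bound_convex t01 hm hc); rewrite -/D.
have -> : (1 - t) * m + t * c - t * (1 - t) / 2 * D = m - t * (D / 2 - (c - m)) / 2.
  by rewrite /t; field; rewrite gt_eqF.
have : 0 < t * (D / 2 - (c - m)) by rewrite mulr_gt0 // subr_gt0.
lra.
Qed.

Lemma minty_zero : exists x, A x (- x).
Proof.
have [xb [ub [m [hm m_le]]]] := fitz_min_exists.
have hge := fitz_bound_ge hm.
have mono_ub_xb y v : A y v -> `|xb + ub| ^+ 2 <= ip (y + ub) (v + xb).
  move=> Ayv; have := fitz_min_growth hm m_le (fitz_bound_graph Ayv).
  rewrite -!(ip_normE ip) in hge *; rewrite !(ipDl, ipBl, ipNl, ipDr, ipBr, ipNr) in hge *.
  by have := ip_sym ip ub xb; have := ip_sym ip y xb; have := ip_sym ip v ub; lra.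
have A_ub : A (- ub) (- xb).
  apply: A_mmono.2 => y v /mono_ub_xb h; apply: le_trans (sqr_ge0 _) _; apply: le_trans h _.
  by rewrite -opprD -(opprD xb) ipNl ipNr opprK addrC (addrC v).
have : `|xb + ub| ^+ 2 <= 0 by have := mono_ub_xb _ _ A_ub; rewrite addNr ip0l.
move=> h; have /eqP : xb + ub = 0.
  by apply/eqP; rewrite -normr_eq0 -sqrf_eq0 eq_le h sqr_ge0.
by rewrite addr_eq0 => /eqP xb_ub; exists xb; rewrite {1}xb_ub.
Qed.

End Fitzpatrick.

Section Resolvent.
Context {R : realType} {V : completeNormedModType R} (ip : inner_product V).

Theorem minty (A : V -> set V) (g : R) w : maximally_monotone ip A -> 0 < g ->
  exists z u, A z u /\ w = z + g *: u.
Proof.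
move=> A_mmono g0.
have gV0 : 0 < g^-1 by rewrite invr_gt0.
set A' := fun x u => A (x + w) (g^-1 *: u).
have A'_mmono : maximally_monotone ip A'.
  split=> [x y u v Ax Ay | x u hxu].
    have := A_mmono.1 _ _ _ _ Ax Ay.
    by rewrite opprD addrACA subrr addr0 -scalerBr ipZr pmulr_rge0.
  apply: A_mmono.2 => y v Ayv.
  have A'y : A' (y - w) (g *: v) by rewrite /A' subrK scalerA mulVf ?gt_eqF // scale1r.
  have := hxu _ _ A'y; rewrite opprB addrA.
  have -> : u - g *: v = g *: (g^-1 *: u - v).
    by rewrite scalerBr scalerA divff ?gt_eqF // scale1r.
  by rewrite ipZr pmulr_rge0.
have [x Ax] := minty_zero A'_mmono.
exists (x + w), (g^-1 *: - x); split => //.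
by rewrite scalerA divff ?gt_eqF // scale1r addrC addKr.
Qed.

Lemma resolventP (A : V -> set V) (g : R) w : maximally_monotone ip A -> 0 < g ->
  exists u, A (resolvent g A w) u /\ w = resolvent g A w + g *: u.
Proof.
move=> A_mmono g0; rewrite /resolvent.
by apply: (@xgetPex _ 0 [set z | exists u, A z u /\ w = z + g *: u]); exact: minty.
Qed.

Lemma lipschitz_monotone_maximal (f : V -> V) (L : R) :
  monotone_op ip (graph_of f) -> lipschitz_op L f -> maximally_monotone ip (graph_of f).
Proof.
move=> f_mono f_lip; split => // x u hxu; rewrite /graph_of /=.
set d := f x - u; set t := (2 * (`|L| + 1))^-1.
have L1 : `|L| + 1 != 0 by rewrite gt_eqF // ltr_wpDl.
have t0 : 0 < t by rewrite invr_gt0 mulr_gt0 // ltr_wpDl.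
have Lt : `|L| * t <= 2^-1.
  have -> : `|L| * t = 2^-1 - t by rewrite /t; field.
  by rewrite lerBlDr lerDl ltW.
have xtd : x - (x - t *: d) = t *: d by rewrite opprB addrC subrK.
have := hxu (x - t *: d) (f (x - t *: d)) erefl.
rewrite xtd ipZl pmulr_rge0 //.
have -> : u - f (x - t *: d) = (f x - f (x - t *: d)) - d.
  by rewrite /d opprB [RHS]addrC addrA subrK.
rewrite ipBr ip_normE subr_ge0 => hd.
have hfd : `|f x - f (x - t *: d)| <= 2^-1 * `|d|.
  have := f_lip x (x - t *: d); rewrite xtd normrZ gtr0_norm // mulrA.
  move/le_trans; apply; apply: ler_wpM2r => //; apply: le_trans Lt.
  by apply: ler_wpM2r; [exact: ltW | exact: ler_norm].
have : `|d| ^+ 2 <= 0.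
  have := le_trans hd (le_trans (ler_norm _) (normr_ip_le ip _ _)).
  by have := normr_ge0 d; nra.
move=> h; have /eqP : d = 0 by apply/eqP; rewrite -normr_eq0 -sqrf_eq0 eq_le h sqr_ge0.
by rewrite subr_eq0 => /eqP ->.
Qed.

End Resolvent.

Section PairingIdentity.
Context {R : realType} {V : normedModType R} (ip : inner_product V).
Variables X Z : nat -> V.

(* With X = x - y and Z = z - z', [mt_res X Z k] is the difference of the resolvent
   residuals at step k; by the resolvent equation it equals gamma (a - a') with
   a, a' the values of A_(k+1) at z^(k+1), z'^(k+1). *)
Definition mt_res k := if k is k'.+1 then Z k' + X k - X k' - Z k else X 0 - Z 0.

Definition mt_pairing m :=
  \sum_(k < m.+1) ip (Z k) (mt_res k) + ip (Z m.+1) (Z 0 + Z m - X m - Z m.+1).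

Lemma sum_ip_mt_res n : \sum_(k < n.+1) ip (Z k) (mt_res k) =
  ip (Z n) (X n) - (`|Z 0| ^+ 2 + `|Z n| ^+ 2) / 2
  - \sum_(k < n) (ip (X k) (Z k.+1 - Z k) + `|Z k.+1 - Z k| ^+ 2 / 2).
Proof.
elim: n => [|n IH]; first by rewrite big_ord1 big_ord0 /= ipBr ip_normE; lra.
rewrite big_ord_recr IH big_ord_recr /= -!(ip_normE ip).
rewrite !(ipDl, ipBl, ipNl, ipDr, ipBr, ipNr).
have := ip_sym ip (Z n) (Z n.+1); have := ip_sym ip (X n) (Z n.+1).
have := ip_sym ip (X n.+1) (Z n.+1); have := ip_sym ip (Z n) (X n).
lra.
Qed.

Lemma mt_pairingE m : mt_pairing m =
  - \sum_(k < m.+1) ip (X k) (Z k.+1 - Z k) - \sum_(k < m.+1) `|Z k.+1 - Z k| ^+ 2 / 2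
  - `|Z 0 - Z m.+1| ^+ 2 / 2.
Proof.
rewrite /mt_pairing sum_ip_mt_res big_split /= !big_ord_recr /= -!(ip_normE ip).
rewrite !(ipDl, ipBl, ipNl, ipDr, ipBr, ipNr).
have := ip_sym ip (Z m) (Z m.+1); have := ip_sym ip (X m) (Z m.+1).
have := ip_sym ip (Z 0) (Z m.+1); have := ip_sym ip (Z m) (X m).
set s1 := \sum_(i < m) _; set s2 := \sum_(i < m) _.
lra.
Qed.

Lemma mt_sum_sqr m (th : R) :
  \sum_(k < m.+1) `|X k + th *: (Z k.+1 - Z k)| ^+ 2 =
  \sum_(k < m.+1) `|X k| ^+ 2 - 2 * th * mt_pairing m
  - th * (1 - th) * \sum_(k < m.+1) `|Z k.+1 - Z k| ^+ 2 - th * `|Z 0 - Z m.+1| ^+ 2.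
Proof.
have -> : \sum_(k < m.+1) `|X k + th *: (Z k.+1 - Z k)| ^+ 2 =
    \sum_(k < m.+1) `|X k| ^+ 2 + 2 * th * \sum_(k < m.+1) ip (X k) (Z k.+1 - Z k)
    + th ^+ 2 * \sum_(k < m.+1) `|Z k.+1 - Z k| ^+ 2.
  rewrite !mulr_sumr -!big_split /=; apply: eq_bigr => k _.
  move: (Z k.+1 - Z k) (X k) => w x.
  by rewrite -!(ip_normE ip) !(ipDl, ipDr, ipZl, ipZr) (ip_sym _ w x); ring.
by rewrite mt_pairingE -mulr_suml; field.
Qed.

End PairingIdentity.

Section Estimates.
Context {R : realType} {V : normedModType R}.

Lemma norm_le_sqrt_sum (F : nat -> V) n i : (i < n)%N ->
  `|F i| <= Num.sqrt (\sum_(k < n) `|F k| ^+ 2).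
Proof.
move=> hi; rewrite -[`|F i|]normr_id -sqrtr_sqr ler_sqrt ?sumr_ge0 //.
by rewrite (bigD1 (Ordinal hi)) //= lerDl sumr_ge0.
Qed.

Lemma norm_sub_le_sum_steps (Z : nat -> V) n j k : (j <= n)%N -> (k <= n)%N ->
  `|Z k - Z j| <= \sum_(i < n) `|Z i.+1 - Z i|.
Proof.
wlog jk : j k / (j <= k)%N.
  move=> H jn kn; have [/H|/ltnW kj] := leqP j k; first exact.
  by rewrite distrC; exact: H.
move=> _ kn; rewrite -(telescope_sumr Z jk); apply: le_trans (ler_norm_sum _ _ _) _.
rewrite -(big_mkord xpredT (fun i => `|Z i.+1 - Z i|)).
rewrite (big_cat_nat (leq0n j) (leq_trans jk kn)) (big_cat_nat jk kn) /=.
by rewrite addrCA lerDl addr_ge0 // sumr_ge0.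
Qed.

Variables X Z : nat -> V.

Lemma sub_sum_mt_res k : X k - Z k = \sum_(i < k.+1) mt_res X Z i.
Proof.
elim: k => [|k IH]; first by rewrite big_ord1.
by rewrite big_ord_recr -IH /= -!addrA addKr addrCA addNKr.
Qed.

Lemma sum_sqr_le_of_res m (lam rho : R) : 0 <= lam ->
  (forall k, (k <= m)%N -> `|Z k| <= rho) ->
  (forall k, (k <= m)%N -> `|mt_res X Z k| <= lam * `|Z k|) ->
  \sum_(k < m.+1) `|X k| ^+ 2 <= m.+1%:R * ((1 + lam * m.+1%:R) * rho) ^+ 2.
Proof.
move=> lam0 hZ hres; have rho0 : 0 <= rho := le_trans (normr_ge0 _) (hZ 0%N isT).
have hX k : (k <= m)%N -> `|X k| <= (1 + lam * m.+1%:R) * rho.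
  move=> km; rewrite -(subrK (Z k) (X k)) sub_sum_mt_res.
  apply: le_trans (ler_normD _ _) _; apply: le_trans (lerD (ler_norm_sum _ _ _) (hZ k km)) _.
  have : \sum_(i < k.+1) `|mt_res X Z i| <= \sum_(i < k.+1) lam * rho.
    apply: ler_sum => i _; have im : (i <= m)%N := leq_trans (ltn_ord i : (i <= k)%N) km.
    by apply: le_trans (hres i im) _; apply: ler_wpM2l => //; exact: hZ.
  rewrite sumr_const card_ord -mulr_natr.
  have : lam * rho * k.+1%:R <= lam * rho * m.+1%:R by rewrite ler_wpM2l ?mulr_ge0 // ler_nat.
  lra.
rewrite [X in _ <= X]mulr_natl -[X in _ *+ X](card_ord m.+1) -sumr_const.
have B0 : 0 <= (1 + lam * m.+1%:R) * rho by rewrite mulr_ge0 // addr_ge0 // mulr_ge0.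
by apply: ler_sum => k _; rewrite lerXn2r ?nnegrE //; apply: hX; rewrite -ltnS.
Qed.

End Estimates.

(* c / K, where with Q := |Z j|^2 + sum |Z (k+1) - Z k|^2 the gap
   sum |X k|^2 - sum |X k + th (Z (k+1) - Z k)|^2 is at least c Q
   and sum |X k|^2 is at most K Q. *)
Definition mt_rate {R : realType} (m : nat) (lam th a mu : R) : R :=
  Num.min (2 * th * a * mu) (th * (1 - th)) /
  (m.+1%:R * (1 + lam * m.+1%:R) ^+ 2 * m.+2%:R ^+ 2).

Section Contraction.
Context {R : realType} {V : normedModType R} (ip : inner_product V).
Variables (m : nat) (th a mu lam : R).
Hypotheses (th01 : 0 < th < 1) (a0 : 0 < a) (mu0 : 0 < mu) (lam0 : 0 <= lam).

Let c := Num.min (2 * th * a * mu) (th * (1 - th)).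
Let K := m.+1%:R * (1 + lam * m.+1%:R) ^+ 2 * m.+2%:R ^+ 2 : R.

Let c_gt0 : 0 < c.
Proof. by case/andP: th01 => ? ?; rewrite lt_min !mulr_gt0 // subr_gt0. Qed.

Let K_ge1 : 1 <= K.
Proof.
have h1 : 1 <= 1 + lam * m.+1%:R by rewrite lerDl mulr_ge0.
by rewrite /K !mulr_ege1 ?ler1n ?expr_ge1 ?ler1n // (le_trans ler01 h1).
Qed.

Lemma mt_rate_gt0 : 0 < mt_rate m lam th a mu.
Proof. by rewrite divr_gt0 // (lt_le_trans ltr01 K_ge1). Qed.

Lemma mt_rate_le1 : mt_rate m lam th a mu <= 1.
Proof.
rewrite ler_pdivrMr ?(lt_le_trans ltr01 K_ge1) // mul1r; apply: le_trans K_ge1.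
by rewrite ge_min; apply/orP; right; case/andP: th01 => ? ?; nra.
Qed.

Variables (X Z : nat -> V) (j : nat).
Hypothesis jm : (j <= m.+1)%N.
Let SX := \sum_(k < m.+1) `|X k| ^+ 2.
Let SW := \sum_(k < m.+1) `|Z k.+1 - Z k| ^+ 2.
Let Q := `|Z j| ^+ 2 + SW.

Let SW_ge0 : 0 <= SW.
Proof. by rewrite sumr_ge0 // => k _; exact: sqr_ge0. Qed.

Let Q_ge0 : 0 <= Q.
Proof. by rewrite addr_ge0 ?sqr_ge0. Qed.

Lemma mt_sum_sqr_le_of_res :
  (forall k, (k <= m)%N -> `|mt_res X Z k| <= lam * `|Z k|) -> SX <= K * Q.
Proof.
move=> hres; have sqQ : 0 <= Num.sqrt Q := sqrtr_ge0 Q.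
have hW i : (i < m.+1)%N -> `|Z i.+1 - Z i| <= Num.sqrt Q.
  move=> im; apply: le_trans (norm_le_sqrt_sum (fun i => Z i.+1 - Z i) im) _.
  by rewrite ler_sqrt // lerDr sqr_ge0.
have hZ k : (k <= m)%N -> `|Z k| <= m.+2%:R * Num.sqrt Q.
  move=> km; rewrite -(subrK (Z j) (Z k)); apply: le_trans (ler_normD _ _) _.
  apply: le_trans (lerD (norm_sub_le_sum_steps Z jm (leqW km)) (_ : `|Z j| <= Num.sqrt Q)) _.
    by rewrite -[`|Z j|]normr_id -sqrtr_sqr ler_sqrt // lerDl.
  have : \sum_(i < m.+1) `|Z i.+1 - Z i| <= \sum_(i < m.+1) Num.sqrt Q.
    by apply: ler_sum => i _; exact: hW.
  by rewrite sumr_const card_ord -mulr_natl -[m.+2%:R]natr1 mulrDl mul1r; lra.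
apply: le_trans (sum_sqr_le_of_res lam0 hZ hres) _.
by rewrite /K !exprMn sqr_sqrtr // le_eqVlt; apply/orP; left; apply/eqP; ring.
Qed.

Lemma mt_gap_ge (g : R) : a <= g -> g * mu * `|Z j| ^+ 2 <= mt_pairing ip X Z m ->
  c * Q <= SX - \sum_(k < m.+1) `|X k + th *: (Z k.+1 - Z k)| ^+ 2.
Proof.
move=> ag hP; have [th0 th1] := andP th01.
rewrite (mt_sum_sqr ip) -/SX -/SW.
have c1 : c * `|Z j| ^+ 2 <= 2 * th * (g * mu * `|Z j| ^+ 2).
  have ca : c <= 2 * th * a * mu by rewrite /c ge_min lexx.
  have ag' : 2 * th * a * mu <= 2 * th * g * mu.
    by apply: ler_wpM2r; [exact: ltW mu0 | apply: ler_wpM2l => //; rewrite mulr_ge0 // ltW].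
  by have := ler_wpM2r (sqr_ge0 `|Z j|) (le_trans ca ag'); lra.
have c2 : c * SW <= th * (1 - th) * SW.
  by rewrite ler_wpM2r // /c ge_min lexx orbT.
have : 0 <= th * `|Z 0 - Z m.+1| ^+ 2 by rewrite mulr_ge0 ?sqr_ge0 // ltW.
have : 2 * th * (g * mu * `|Z j| ^+ 2) <= 2 * th * mt_pairing ip X Z m.
  by rewrite ler_wpM2l // mulr_ge0 // ltW.
rewrite /Q; lra.
Qed.

Lemma mt_contraction_estimate (g : R) : a <= g ->
  g * mu * `|Z j| ^+ 2 <= mt_pairing ip X Z m ->
  (forall k, (k <= m)%N -> `|mt_res X Z k| <= lam * `|Z k|) ->
  \sum_(k < m.+1) `|X k + th *: (Z k.+1 - Z k)| ^+ 2 <=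
  (1 - mt_rate m lam th a mu) * \sum_(k < m.+1) `|X k| ^+ 2.
Proof.
move=> ag hP hres; have := mt_gap_ge ag hP; rewrite -/SX.
have K0 : 0 < K := lt_le_trans ltr01 K_ge1.
have : c / K * SX <= c / K * (K * Q).
  by apply: ler_wpM2l; [rewrite divr_ge0 ?ltW | exact: mt_sum_sqr_le_of_res].
rewrite mulrA divfK ?(negbT (gt_eqF K0)) // /mt_rate -/c -/K; lra.
Qed.

End Contraction.

Lemma subrACA (W : zmodType) (a b c d : W) : (a - b) - (c - d) = (a - c) - (b - d).
Proof. by rewrite opprB addrACA [in RHS]opprB [in RHS]addrACA [- b + _]addrC. Qed.

Lemma subrACA4 (W : zmodType) (a a' b b' c c' d d' : W) :
  (a - a') + (b - b') - (c - c') - (d - d') = (a + b - c - d) - (a' + b' - c' - d').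
Proof. by rewrite addrACA -opprD [X in X - (d - d')]subrACA [LHS]subrACA. Qed.

Section MalitskyTam.
Context {R : realType} {V : completeNormedModType R} (ip : inner_product V).
Variables (m : nat) (A : 'I_m.+1 -> V -> V) (B : V -> set V) (g th : R).
Hypotheses (A_mmono : forall j, maximally_monotone ip (graph_of (A j)))
           (B_mmono : maximally_monotone ip B) (g0 : 0 < g).

Definition mt_J (k : nat) : V -> V :=
  match @insub nat (fun k => k < m.+1)%N _ k with
  | Some j => resolvent g (graph_of (A j)) | None => id end.

(* the points z^1, ..., z^N of the definition, shifted to 0-based indices *)
Definition mt_zs (x : 'I_m.+1 -> V) (i : nat) : V :=
  if (i < m.+1)%N then mt_z mt_J (nat_get x) i
  else resolvent g B (mt_z mt_J (nat_get x) 0 + mt_z mt_J (nat_get x) m - nat_get x m).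

Lemma MT_opE x i : MT_op g th A B x i = x i + th *: (mt_zs x i.+1 - mt_zs x i).
Proof. by []. Qed.

Lemma nat_get_ord (x : 'I_m.+1 -> V) (i : 'I_m.+1) : nat_get x i = x i.
Proof.
by rewrite /nat_get (insubT (fun k => k < m.+1)%N (ltn_ord i)) /=; congr x; apply: val_inj.
Qed.

Lemma mt_J_ord k (hk : (k < m.+1)%N) : mt_J k = resolvent g (graph_of (A (Ordinal hk))).
Proof.
by rewrite /mt_J (insubT (fun k => k < m.+1)%N hk) /=; do 3 congr (_ _); apply: val_inj.
Qed.

Definition mt_arg x k :=
  if k is k'.+1 then mt_zs x k' + nat_get x k - nat_get x k' else nat_get x 0.

Lemma mt_argE x k (hk : (k < m.+1)%N) :
  mt_arg x k = mt_zs x k + g *: A (Ordinal hk) (mt_zs x k).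
Proof.
have -> : mt_zs x k = resolvent g (graph_of (A (Ordinal hk))) (mt_arg x k).
  rewrite /mt_zs hk -mt_J_ord; case: k hk => [|k] hk //=.
  by rewrite /mt_zs (ltnW hk).
have [u [/= <-]] := resolventP (mt_arg x k) (A_mmono (Ordinal hk)) g0.
exact.
Qed.

Lemma mt_zs_lastE x : exists u, B (mt_zs x m.+1) u /\
  mt_zs x 0 + mt_zs x m - nat_get x m = mt_zs x m.+1 + g *: u.
Proof.
have -> : mt_zs x m.+1 = resolvent g B (mt_zs x 0 + mt_zs x m - nat_get x m).
  by rewrite /mt_zs ltnn /= ltnS leqnn.
exact: resolventP _ B_mmono g0.
Qed.

Section Differences.
Variables x y : 'I_m.+1 -> V.
Let X k := nat_get x k - nat_get y k.
Let Z k := mt_zs x k - mt_zs y k.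

Lemma mt_res_diff k (hk : (k < m.+1)%N) :
  mt_res X Z k = g *: (A (Ordinal hk) (mt_zs x k) - A (Ordinal hk) (mt_zs y k)).
Proof.
have -> : mt_res X Z k = (mt_arg x k - mt_zs x k) - (mt_arg y k - mt_zs y k).
  by case: k hk => [|k] hk; rewrite /X /Z /= ?subrACA4 // subrACA.
by rewrite !mt_argE ![mt_zs _ _ + _]addrC !addrK scalerBr.
Qed.

Lemma mt_last_diff : exists ux uy, B (mt_zs x m.+1) ux /\ B (mt_zs y m.+1) uy /\
  Z 0 + Z m - X m - Z m.+1 = g *: (ux - uy).
Proof.
have [ux [Bux ex]] := mt_zs_lastE x; have [uy [Buy ey]] := mt_zs_lastE y.
exists ux, uy; split => //; split => //.
by rewrite /X /Z subrACA4 ex ey ![mt_zs _ _ + _]addrC !addrK scalerBr.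
Qed.

Variable mu : R.
Hypothesis strong : (forall j, strongly_monotone ip mu (graph_of (A j))) \/
                   strongly_monotone ip mu B.

Lemma mt_pairing_ge :
  exists2 j, (j <= m.+1)%N & g * mu * `|Z j| ^+ 2 <= mt_pairing ip X Z m.
Proof.
have hres k (hk : (k < m.+1)%N) : ip (Z k) (mt_res X Z k) =
    g * ip (Z k) (A (Ordinal hk) (mt_zs x k) - A (Ordinal hk) (mt_zs y k)).
  by rewrite mt_res_diff ipZr.
have res_ge0 (k : 'I_m.+1) : 0 <= ip (Z k) (mt_res X Z k).
  rewrite (hres k (ltn_ord k)) mulr_ge0 ?(ltW g0) //.
  exact: (A_mmono _).1 _ _ _ _ erefl erefl.
have [ux [uy [Bux [Buy elast]]]] := mt_last_diff.
have last_ge : 0 <= ip (Z m.+1) (Z 0 + Z m - X m - Z m.+1).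
  by rewrite elast ipZr mulr_ge0 ?(ltW g0) //; exact: B_mmono.1.
rewrite /mt_pairing; case: strong => [A_strong | B_strong].
- exists 0%N => //; rewrite big_ord_recl -addrA; apply: ler_wpDr.
    by rewrite addr_ge0 // sumr_ge0 // => i _; exact: res_ge0.
  rewrite (hres 0%N isT) -mulrA ler_wpM2l ?(ltW g0) //.
  exact: A_strong _ _ _ _ _ erefl erefl.
- exists m.+1 => //; rewrite ler_wpDl ?sumr_ge0 // elast ipZr -mulrA.
  by rewrite ler_wpM2l ?(ltW g0) //; exact: B_strong.
Qed.

Lemma MT_op_sum_sqr_le (a b L : R) : 0 < th < 1 -> 0 < a -> a <= g <= b -> 0 < mu ->
  (forall j, lipschitz_op L (A j)) ->
  \sum_(i < m.+1) `|MT_op g th A B x i - MT_op g th A B y i| ^+ 2 <=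
  (1 - mt_rate m (b * `|L|) th a mu) * \sum_(i < m.+1) `|x i - y i| ^+ 2.
Proof.
move=> th01 a0 /andP[ag gb] mu0 A_lip.
have lam0 : 0 <= b * `|L| by rewrite mulr_ge0 // (le_trans (ltW g0) gb).
have -> : \sum_(i < m.+1) `|MT_op g th A B x i - MT_op g th A B y i| ^+ 2 =
    \sum_(k < m.+1) `|X k + th *: (Z k.+1 - Z k)| ^+ 2.
  by apply: eq_bigr => i _; rewrite !MT_opE opprD addrACA -scalerBr subrACA /X !nat_get_ord.
have -> : \sum_(i < m.+1) `|x i - y i| ^+ 2 = \sum_(k < m.+1) `|X k| ^+ 2.
  by apply: eq_bigr => i _; rewrite /X !nat_get_ord.
have [j jm hj] := mt_pairing_ge.
apply: (mt_contraction_estimate th01 a0 mu0 lam0 jm ag hj) => k km.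
rewrite (mt_res_diff km) normrZ gtr0_norm //.
apply: le_trans (ler_wpM2l (ltW g0) (A_lip _ _ _)) _; rewrite mulrA.
apply: ler_wpM2r => //; apply: le_trans (ler_wpM2l (ltW g0) (ler_norm L)) _.
by apply: ler_wpM2r.
Qed.

End Differences.
End MalitskyTam.

Theorem lemma5p2 (R : realType) (V : completeNormedModType R)
  (ip : inner_product V) (N : nat) (hN : (2 <= N)%N) (theta : R)
  (htheta : 0 < theta < 1) (a b : R) (ha : 0 < a) (hab : a <= b)
  (A : 'I_N.-1 -> V -> V) (B : V -> set V) (L mu : R) (hmu : 0 < mu) :
  ((forall j, monotone_op ip (graph_of (A j)) /\ lipschitz_op L (A j)) /\
     maximally_strongly_monotone ip mu B)
  \/
  ((forall j, maximally_strongly_monotone ip mu (graph_of (A j)) /\ lipschitz_op L (A j)) /\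
     maximally_monotone ip B) ->
  exists beta : R, 0 <= beta < 1 /\
    forall gamma : R, a <= gamma <= b ->
      beta_contraction beta (MT_op gamma theta A B).
Proof.
case: N hN A => [|[|m]] // _ A hyp.
have [A_mmono B_mmono A_lip strong] :
    [/\ forall j, maximally_monotone ip (graph_of (A j)), maximally_monotone ip B,
        forall j, lipschitz_op L (A j) &
        (forall j, strongly_monotone ip mu (graph_of (A j))) \/ strongly_monotone ip mu B].
  case: hyp => [[hA [B_mmono B_strong]] | [hA B_mmono]]; split => //.
  - by move=> j; exact: lipschitz_monotone_maximal (hA j).1 (hA j).2.
  - by move=> j; exact: (hA j).2.
  - by right.
  - by move=> j; exact: (hA j).1.1.
  - by move=> j; exact: (hA j).2.
  - by left => j; exact: (hA j).1.2.
set kappa := mt_rate m (b * `|L|) theta a mu.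
have lam0 : 0 <= b * `|L| by rewrite mulr_ge0 // ltW // (lt_le_trans ha hab).
have k0 : 0 < kappa := mt_rate_gt0 m htheta ha hmu lam0.
have k1 : kappa <= 1 := mt_rate_le1 m a mu htheta lam0.
exists (Num.sqrt (1 - kappa)); split.
  by rewrite sqrtr_ge0 /= -[X in _ < X]sqrtr1 ltr_sqrt ?ltr01 // ltrBlDr ltrDl.
move=> gamma hg x y; rewrite /prod_norm -sqrtrM ?subr_ge0 // ler_sqrt; last first.
  by rewrite mulr_ge0 ?subr_ge0 // sumr_ge0 // => *; exact: sqr_ge0.
have g0 : 0 < gamma by case/andP: hg => ag _; exact: lt_le_trans ha ag.
exact: (MT_op_sum_sqr_le A_mmono B_mmono g0 x y strong htheta ha hg hmu A_lip).
Qed.
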